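(* Let $F$ be a field, $n\in\mathbb N\cup\{\infty\}$, and let $\varphi:\mathrm{UT}(n,F)\to\mathrm{UT}(n,F)$ be an almost identity PC-map. Then for every $a\in\mathrm{UT}(n,F)$ we have $\varphi(a)_{ij}=a_{ij}$ and $(\varphi(a)^{-1})_{ij}=(a^{-1})_{ij}$ for all indices $i\ge 2$ and $j\le n-1$ (when $n=\infty$, $j\le n-1$ means $j$ arbitrary). In other words, $\varphi(a)$ and $a$ (and also their inverses) can differ only in the first row and the last column.
   Context: $F$ is a field and $n\in\mathbb N\cup\{\infty\}$. $\mathrm{UT}(n,F)$ is the group of upper unitriangular $n\times n$ matrices over $F$; for $n=\infty$ the rows and columns are indexed by $\mathbb N=\{1,2,\dots\}$ and $\mathrm{UT}(\infty,F)$ consists of all $\mathbb N\times\mathbb N$ matrices with $1$ on the diagonal and $0$ below it. Convention: $\infty+m=\infty$ for $m\in\mathbb Z$. $e$ is the identity matrix, $e_{ij}$ the matrix unit, $t_{ij}(\alpha)=e+\alpha e_{ij}$ ($i<j$, $\alpha\in F$) the elementary transvection. $a_{ij}$ denotes the $(i,j)$-entry of $a$. The group commutator is $[x,y]=xyx^{-1}y^{-1}$. A PC-map of a group $G$ is a bijection $\varphi:G\to G$ with $\varphi([x,y])=[\varphi(x),\varphi(y)]$ for all $x,y\in G$. A map $\varphi:\mathrm{UT}(n,F)\to\mathrm{UT}(n,F)$ is almost identity if $\varphi(t_{ij}(\alpha))=t_{ij}(\alpha)$ for all $i<j$ and $\alpha\in F$. *)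

From HB Require Import structures.
From mathcomp Require Import all_boot all_order all_algebra.
Set Implicit Arguments. Unset Strict Implicit. Unset Printing Implicit Defensive.
Import GRing.Theory.
Local Open Scope ring_scope.

(* Dimension n ∈ ℕ ∪ {∞}: [Some m] is the finite size m, [None] is ∞. *)
Definition dimn := option nat.

(* Indices are 1-based: i is a valid index iff 1 <= i <= n (1 <= i when n = ∞). *)
Definition inrange (n : dimn) (i : nat) : bool :=
  (1 <= i)%N && (if n is Some m then (i <= m)%N else true).

(* Matrices indexed by nat × nat; entries at invalid indices are meaningless
   and normalised to 0 for members of UT(n,F). *)
Definition mx (F : fieldType) := nat -> nat -> F.

Definition idm (F : fieldType) (n : dimn) : mx F :=
  fun i j => ((inrange n i) && (i == j))%:R.

Definition isUT (F : fieldType) (n : dimn) (a : mx F) : Prop :=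
  forall i j, ~~ [&& inrange n i, inrange n j & (i < j)%N] -> a i j = idm F n i j.

(* matrix product; for upper triangular matrices the (i,j) entry only
   involves k with i <= k <= j, so it is a finite sum even for n = ∞. *)
Definition mxmul (F : fieldType) (a b : mx F) : mx F :=
  fun i j => \sum_(i <= k < j.+1) a i k * b k j.

(* inverse of a unitriangular matrix: a^{-1} = Σ_m (e - a)^m, where
   ((e-a)^m)_{ij} = 0 for m > j - i, so the sum is finite entrywise. *)
Definition mxinv (F : fieldType) (n : dimn) (a : mx F) : mx F :=
  let N := fun i j => idm F n i j - a i j in
  fun i j => \sum_(m < (j - i).+1) iter m (mxmul N) (idm F n) i j.

Definition comm (F : fieldType) (n : dimn) (x y : mx F) : mx F :=
  mxmul (mxmul (mxmul x y) (mxinv n x)) (mxinv n y).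

Definition transv (F : fieldType) (n : dimn) (i j : nat) (alpha : F) : mx F :=
  fun k l => idm F n k l + (if (k == i) && (l == j) then alpha else 0).

Definition is_PCmap (F : fieldType) (n : dimn) (phi : mx F -> mx F) : Prop :=
  [/\ (forall a, isUT n a -> isUT n (phi a)),
      (forall a b, isUT n a -> isUT n b -> phi a = phi b -> a = b),
      (forall b, isUT n b -> exists a, isUT n a /\ phi a = b)
    & (forall x y, isUT n x -> isUT n y -> phi (comm n x y) = comm n (phi x) (phi y))].

Definition almost_identity (F : fieldType) (n : dimn) (phi : mx F -> mx F) : Prop :=
  forall i j (alpha : F), inrange n i -> inrange n j -> (i < j)%N ->
    phi (transv n i j alpha) = transv n i j alpha.

From mathcomp Require Import all_boot all_algebra zify ring.
From Stdlib Require Import FunctionalExtensionality.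
Set Implicit Arguments. Unset Strict Implicit. Unset Printing Implicit Defensive.
Import GRing.Theory.
Local Open Scope ring_scope.

(* Fix p >= 2, a column q < n and some column N > q (N = n when n is finite). A direct
   computation gives [t_1p(1), a] = e + e_1 v^T, where v is the p-th row of e - a^-1, and then
   [[t_1p(1), a], t_qN(1)] = t_1N(v_q). A commutator-preserving map fixing every transvection
   therefore preserves the (p, q) entry of the inverse. The (i, j) entry of the inverse of a
   unitriangular matrix only involves the entries in rows >= i and columns <= j, so applying
   this to a = (a^-1)^-1 and phi(a) = (phi(a)^-1)^-1 transfers the equality to the entries of
   a and phi(a) themselves. *)

Lemma sum_nat_triangle (R : nmodType) (i J : nat) (f : nat -> nat -> R) :
  \sum_(i <= k < J) \sum_(i <= l < k.+1) f l k =
  \sum_(i <= l < J) \sum_(l <= k < J) f l k.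
Proof.
elim: J => [|J IH]; first by rewrite !big_geq.
case: (leqP i J) => hiJ; last by rewrite !big_geq.
rewrite big_nat_recr //= IH [in RHS]big_nat_recr //= big_nat1.
rewrite [X in _ + X = _]big_nat_recr //= addrA; congr (_ + _).
rewrite -big_split /=; apply: eq_big_nat => l /andP[_ hl].
by rewrite big_nat_recr //=; lia.
Qed.

Lemma inrange1 (n : dimn) (p : nat) : inrange n p -> inrange n 1.
Proof. by rewrite /inrange; case: n => [m|] /= /andP[h1 h2] //; lia. Qed.

Section Unitriangular.

Variables (F : fieldType) (n : dimn).
Implicit Types (a b c d x y z : mx F) (v : nat -> F).

Lemma mxP a b : (forall i j, a i j = b i j) -> a = b.
Proof. by move=> eq_ab; do 2!apply: functional_extensionality => ?; apply: eq_ab. Qed.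

Lemma idmEl i k : idm F n i k = if k == i then (inrange n i)%:R else 0.
Proof. by rewrite /idm; case: (eqVneq k i) => _; rewrite ?andbT ?andbF. Qed.

Lemma idmEr k j : idm F n k j = if k == j then (inrange n j)%:R else 0.
Proof. by rewrite /idm; case: (eqVneq k j) => [->|_]; rewrite ?andbT ?andbF. Qed.

Lemma idm_outl i j : ~~ inrange n i -> idm F n i j = 0.
Proof. by rewrite /idm => /negbTE ->. Qed.

Lemma idm_outr i j : ~~ inrange n j -> idm F n i j = 0.
Proof. by rewrite idmEr => /negbTE ->; case: ifP. Qed.

Lemma idm_offdiag i j : i != j -> idm F n i j = 0.
Proof. by rewrite idmEr => /negbTE ->. Qed.

Lemma UT_lower a i j : isUT n a -> (j < i)%N -> a i j = 0.
Proof.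
move=> Ha hji; rewrite Ha; last by rewrite ltnNge (ltnW hji) !andbF.
by rewrite idm_offdiag // neq_ltn hji orbT.
Qed.

Lemma UT_diag a i : isUT n a -> a i i = (inrange n i)%:R.
Proof. by move=> Ha; rewrite Ha ?ltnn ?andbF // /idm eqxx andbT. Qed.

Lemma UT_outl a i j : isUT n a -> ~~ inrange n i -> a i j = 0.
Proof. by move=> Ha hi; rewrite Ha ?idm_outl // (negbTE hi). Qed.

Lemma UT_outr a i j : isUT n a -> ~~ inrange n j -> a i j = 0.
Proof. by move=> Ha hj; rewrite Ha ?idm_outr // (negbTE hj) andbF. Qed.

Lemma idm_mxmulE a i j : isUT n a -> \sum_(i <= k < j.+1) idm F n i k * a k j = a i j.
Proof.
move=> Ha; under eq_bigr => k _ do rewrite idmEl (fun_if (fun t => t * a k j)) mul0r.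
rewrite -big_mkcond big_nat1_eq leqnn ltnS /=.
case: (boolP (inrange n i)) => hi; last by rewrite mul0r if_same (UT_outl _ Ha).
by rewrite mul1r; case: leqP => // hji; rewrite (UT_lower Ha).
Qed.

Lemma mxmul_idmE a i j : isUT n a -> \sum_(i <= k < j.+1) a i k * idm F n k j = a i j.
Proof.
move=> Ha; under eq_bigr => k _ do rewrite idmEr (fun_if (fun t => a i k * t)) mulr0.
rewrite -big_mkcond big_nat1_eq ltnSn andbT.
case: (boolP (inrange n j)) => hj; last by rewrite mulr0 if_same (UT_outr _ Ha).
by rewrite mulr1; case: leqP => // hji; rewrite (UT_lower Ha).
Qed.

Lemma idm_mxmul a : isUT n a -> mxmul (idm F n) a = a.
Proof. by move=> Ha; apply: mxP => i j; apply: idm_mxmulE. Qed.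

Lemma mxmul_idm a : isUT n a -> mxmul a (idm F n) = a.
Proof. by move=> Ha; apply: mxP => i j; apply: mxmul_idmE. Qed.

Lemma mxmulA a b c : mxmul (mxmul a b) c = mxmul a (mxmul b c).
Proof.
apply: mxP => i j; rewrite /mxmul.
under eq_bigr => k _ do rewrite mulr_suml.
rewrite sum_nat_triangle; apply: eq_bigr => l _; rewrite mulr_sumr.
by apply: eq_bigr => k _; rewrite mulrA.
Qed.

Lemma mxmulBl b c d :
  mxmul (fun i j => b i j - c i j) d = fun i j => mxmul b d i j - mxmul c d i j.
Proof.
apply: mxP => i j; rewrite /mxmul -sumrB.
by apply: eq_bigr => k _; rewrite mulrBl.
Qed.

Lemma mxmul_UT a b : isUT n a -> isUT n b -> isUT n (mxmul a b).
Proof.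
move=> Ha Hb i j hij; rewrite /mxmul.
case: (ltngtP i j) => [ltij|ltji|<-].
- case: (boolP (inrange n i)) => hi; last first.
    by rewrite idm_outl // big1 // => k _; rewrite (UT_outl _ Ha) ?mul0r.
  have hj : ~~ inrange n j by move: hij; rewrite hi ltij andbT.
  by rewrite idm_outr // big1 // => k _; rewrite (UT_outr _ Hb) ?mulr0.
- by rewrite big_geq // idm_offdiag //; apply/eqP; lia.
- rewrite big_nat1 (UT_diag _ Ha) (UT_diag _ Hb) /idm eqxx andbT.
  by case: (inrange n i); rewrite ?mul1r ?mul0r.
Qed.

Definition mxnil a : mx F := fun i j => idm F n i j - a i j.
Definition mxnil_pow a m : mx F := iter m (mxmul (mxnil a)) (idm F n).

Lemma mxinvE a i j : mxinv n a i j = \sum_(m < (j - i).+1) mxnil_pow a m i j.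
Proof. by []. Qed.

Lemma mxnil_powS a m i j :
  mxnil_pow a m.+1 i j = \sum_(i <= k < j.+1) mxnil a i k * mxnil_pow a m k j.
Proof. by []. Qed.

Lemma mxnil_UT a i j :
  isUT n a -> ~~ [&& inrange n i, inrange n j & (i < j)%N] -> mxnil a i j = 0.
Proof. by move=> Ha hij; rewrite /mxnil Ha // subrr. Qed.

Lemma mxnil_pow_outl a m i j : isUT n a -> ~~ inrange n i -> mxnil_pow a m i j = 0.
Proof.
move=> Ha hi; case: m => [|m]; first by rewrite /= idm_outl.
by rewrite mxnil_powS big1 // => k _; rewrite mxnil_UT ?mul0r // (negbTE hi).
Qed.

Lemma mxnil_pow_outr a m i j : isUT n a -> ~~ inrange n j -> mxnil_pow a m i j = 0.
Proof.
move=> Ha hj; elim: m i => [|m IH] i; first by rewrite /= idm_outr.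
by rewrite mxnil_powS big1 // => k _; rewrite IH mulr0.
Qed.

Lemma mxnil_pow_lower a m i j : isUT n a -> (j < i + m)%N -> mxnil_pow a m i j = 0.
Proof.
move=> Ha; elim: m i => [|m IH] i hj.
  by rewrite /= idm_offdiag //; apply/eqP; lia.
rewrite mxnil_powS big1 // => k _; case: (ltnP i k) => hik.
  by rewrite IH ?mulr0 //; lia.
by rewrite mxnil_UT ?mul0r // ltnNge hik !andbF.
Qed.

Lemma mxinv_sum a i j K : isUT n a ->
  (j - i < K)%N -> mxinv n a i j = \sum_(m < K) mxnil_pow a m i j.
Proof.
move=> Ha hK; rewrite mxinvE -!(big_mkord xpredT (fun m => mxnil_pow a m i j)).
rewrite [RHS](big_cat_nat _ (n := (j - i).+1)) //= [X in _ + X]big1_seq ?addr0 // => m.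
by move=> /andP[_]; rewrite mem_index_iota => /andP[hm _]; apply: mxnil_pow_lower => //; lia.
Qed.

Lemma mxinv_UT a : isUT n a -> isUT n (mxinv n a).
Proof.
move=> Ha i j hij.
case: (boolP (inrange n i)) => hi.
  case: (boolP (inrange n j)) => hj.
    move: hij; rewrite hi hj /= -leqNgt => hji.
    by rewrite mxinvE (_ : j - i = 0)%N ?big_ord1 //; lia.
  by rewrite idm_outr // mxinvE big1 // => m _; rewrite mxnil_pow_outr.
by rewrite idm_outl // mxinvE big1 // => m _; rewrite mxnil_pow_outl.
Qed.

(* With N = e - a, the inverse is the truncated series e + N + ... + N^(K-1); multiplying by N
   shifts it to N + ... + N^K, and the (i, j) entry of N^K vanishes. *)
Lemma mxnil_mxinv a i j :
  isUT n a -> mxmul (mxnil a) (mxinv n a) i j = mxinv n a i j - idm F n i j.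
Proof.
move=> Ha; set K := (j - i).+1.
transitivity (\sum_(m < K) mxnil_pow a m.+1 i j).
  transitivity (\sum_(i <= k < j.+1) \sum_(m < K) mxnil a i k * mxnil_pow a m k j).
    by apply: eq_big_nat => k hk; rewrite (@mxinv_sum _ _ _ K) ?mulr_sumr //; lia.
  by rewrite exchange_big.
by rewrite (@mxinv_sum _ _ _ K.+1) // [in RHS]big_ord_recl [in RHS]addrC addKr.
Qed.

Lemma mxmulV a : isUT n a -> mxmul a (mxinv n a) = idm F n.
Proof.
move=> Ha; have Hb := mxinv_UT Ha.
have -> : mxmul a (mxinv n a) = mxmul (fun i j => idm F n i j - mxnil a i j) (mxinv n a).
  by congr mxmul; apply: mxP => i j; rewrite /mxnil opprB addrC subrK.
rewrite mxmulBl idm_mxmul //; apply: mxP => i j.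
by rewrite mxnil_mxinv // opprB addrC subrK.
Qed.

Lemma mxmulVl a : isUT n a -> mxmul (mxinv n a) a = idm F n.
Proof.
move=> Ha; have Hb := mxinv_UT Ha.
rewrite -[LHS](mxmul_idm (mxmul_UT Hb Ha)) -(mxmulV Hb) -mxmulA.
by rewrite [mxmul (mxmul _ a) _]mxmulA mxmulV // mxmul_idm.
Qed.

Lemma mxinvK a : isUT n a -> mxinv n (mxinv n a) = a.
Proof.
move=> Ha; have Hb := mxinv_UT Ha; have Hc := mxinv_UT Hb.
by rewrite -[RHS](mxmul_idm Ha) -(mxmulV Hb) -mxmulA mxmulV // idm_mxmul.
Qed.

Lemma mxinv_local a b i j :
  (forall k l, (i <= k)%N -> (l <= j)%N -> a k l = b k l) ->
  mxinv n a i j = mxinv n b i j.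
Proof.
move=> eq_ab; rewrite !mxinvE; apply: eq_bigr => m _.
suff: forall k l, (i <= k)%N -> (l <= j)%N -> mxnil_pow a m k l = mxnil_pow b m k l by apply.
elim: (nat_of_ord m) => [|p IH] k l hk hl //.
rewrite !mxnil_powS; apply: eq_big_nat => r /andP[hkr hrl].
by rewrite /mxnil eq_ab ?IH //; lia.
Qed.

Lemma comm_UT x y : isUT n x -> isUT n y -> isUT n (comm n x y).
Proof.
by move=> Hx Hy; do 2!apply: mxmul_UT (mxinv_UT _) => //; apply: mxmul_UT.
Qed.

Lemma comm_eq_mul x y z : isUT n x -> isUT n y -> isUT n z ->
  mxmul (mxmul z y) x = mxmul x y -> comm n x y = z.
Proof.
move=> Hx Hy Hz; rewrite /comm => <-; have Hzy := mxmul_UT Hz Hy.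
rewrite [mxmul (mxmul (mxmul z y) x) _]mxmulA mxmulV // mxmul_idm //.
by rewrite mxmulA mxmulV // mxmul_idm.
Qed.

Lemma mxmul_widen b c lo i j : (lo <= i)%N -> (forall k, (k < i)%N -> b i k = 0) ->
  \sum_(lo <= k < j.+1) b i k * c k j = mxmul b c i j.
Proof.
move=> hlo hb; rewrite /mxmul [RHS](@big_nat_widenl _ _ _ i lo) // big_mkcond /=.
by apply: eq_bigr => k _; case: leqP => // hk; rewrite hb ?mul0r.
Qed.

Lemma mxnil_mxmul b c : isUT n c -> mxmul (mxnil b) c = fun i j => c i j - mxmul b c i j.
Proof. by move=> Hc; rewrite /mxnil mxmulBl idm_mxmul. Qed.

Lemma transv_UT p q (alpha : F) : inrange n p -> inrange n q -> (p < q)%N ->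
  isUT n (transv n p q alpha).
Proof.
move=> hp hq hpq k l hkl; rewrite /transv.
case: (eqVneq k p) => [Ek|]; case: (eqVneq l q) => [El|] //=; rewrite ?addr0 //.
by move: hkl; rewrite Ek El hp hq hpq.
Qed.

Lemma transv_mxmul a p q (alpha : F) : isUT n a -> (p <= q)%N ->
  mxmul (transv n p q alpha) a = fun k l => a k l + (if k == p then alpha * a q l else 0).
Proof.
move=> Ha hpq; apply: mxP => k l.
rewrite /mxmul /transv; under eq_bigr => r _ do rewrite mulrDl.
rewrite big_split /= idm_mxmulE //; congr (_ + _).
case: (eqVneq k p) => [->|_] /=; last by rewrite big1 // => r _; rewrite mul0r.
under eq_bigr => r _ do rewrite (fun_if (fun t => t * a r l)) mul0r.
rewrite -big_mkcond big_nat1_eq hpq /=; case: leqP => // hlq.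
by rewrite (UT_lower Ha) // mulr0.
Qed.

Lemma mxmul_transv a p q (alpha : F) : isUT n a -> (p <= q)%N ->
  mxmul a (transv n p q alpha) = fun k l => a k l + (if l == q then a k p * alpha else 0).
Proof.
move=> Ha hpq; apply: mxP => k l.
rewrite /mxmul /transv; under eq_bigr => r _ do rewrite mulrDr.
rewrite big_split /= mxmul_idmE //; congr (_ + _).
case: (eqVneq l q) => [->|_] /=; last by rewrite big1 // => r _; rewrite andbF mulr0.
under eq_bigr => r _ do rewrite andbT (fun_if (fun t => a k r * t)) mulr0.
rewrite -big_mkcond big_nat1_eq; case: (leqP k p) => hkp /=.
  by rewrite (_ : p < q.+1)%N //; lia.
by rewrite (UT_lower Ha) // mul0r.
Qed.

Definition row1mx v : mx F := fun k l => idm F n k l + (if k == 1%N then v l else 0).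

Definition UTrow v : Prop := forall l, ~~ (inrange n l && (1 < l)%N) -> v l = 0.

Lemma row1mx_UT v : inrange n 1 -> UTrow v -> isUT n (row1mx v).
Proof.
move=> h1 hv k l hkl; rewrite /row1mx; case: (eqVneq k 1%N) => [Ek|]; last by rewrite addr0.
by rewrite hv ?addr0 //; move: hkl; rewrite Ek h1.
Qed.

Lemma UTrow_mxnil b p : isUT n b -> (1 < p)%N -> UTrow (mxnil b p).
Proof.
move=> Hb h1p l hl; apply: (mxnil_UT Hb); apply: contra hl => /and3P[_ -> hpl].
by apply: ltn_trans hpl.
Qed.

(* The first column of a unitriangular matrix is e_1, so right multiplication by row1mx v only adds v to the first row. *)
Lemma mxmul_row1mx a v : isUT n a -> inrange n 1 -> UTrow v ->
  mxmul a (row1mx v) = fun k l => a k l + (if k == 1%N then v l else 0).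
Proof.
move=> Ha h1 hv; apply: mxP => k l.
rewrite /mxmul /row1mx; under eq_bigr => r _ do rewrite mulrDr.
rewrite big_split /= mxmul_idmE //; congr (_ + _).
under eq_bigr => r _ do rewrite (fun_if (fun t => a k r * t)) mulr0.
rewrite -big_mkcond big_nat1_eq.
case: (eqVneq k 1%N) => [->|hk].
  rewrite leqnn (UT_diag _ Ha) h1 mul1r /=.
  by case: l => [|l] //; rewrite hv.
case: ifP => // /andP[hk1 _]; rewrite (_ : k = 0)%N; last by lia.
by rewrite (UT_outl _ Ha) ?mul0r.
Qed.

Lemma row1mx_mxmul a v : isUT n a -> mxmul (row1mx v) a =
  fun k l => a k l + (if k == 1%N then \sum_(1 <= r < l.+1) v r * a r l else 0).
Proof.
move=> Ha; apply: mxP => k l.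
rewrite /mxmul /row1mx; under eq_bigr => r _ do rewrite mulrDl.
rewrite big_split /= idm_mxmulE //; congr (_ + _).
by case: (eqVneq k 1%N) => [->|hk] //; rewrite big1 // => r _; rewrite mul0r.
Qed.

Lemma comm_row1mx_transv v q N : UTrow v -> inrange n q -> inrange n N -> (q < N)%N ->
  comm n (row1mx v) (transv n q N 1) = transv n 1 N (v q).
Proof.
move=> hv hq hN hqN; have h1 := inrange1 hq.
have h1N : (1 < N)%N by move: hq; rewrite /inrange => /andP[? _]; lia.
have HS := transv_UT 1 hq hN hqN.
have HZ := transv_UT (v q) h1 hN h1N.
apply: comm_eq_mul => //; first exact: row1mx_UT.
rewrite (mxmul_row1mx (mxmul_UT HZ HS) h1 hv) (transv_mxmul (v q) HS (ltnW h1N)).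
rewrite (mxmul_transv 1 (row1mx_UT h1 hv) (ltnW hqN)).
apply: mxP => k l.
have hNq : (N == q) = false by apply/eqP; lia.
rewrite /row1mx /transv [idm F n N l]idmEl [idm F n k q]idmEr hN hq.
case: (eqVneq l N) => [El|nl]; case: (eqVneq k 1%N) => [Ek|nk]; case: (eqVneq k q) => [Eq|nq];
  rewrite ?El ?Ek ?Eq ?eqxx ?hNq /= ?andbT ?andbF ?mulr1 ?mulr0 ?addr0 ?add0r //.
all: try (by exfalso; lia).
all: ring.
Qed.

Lemma comm_transv_row1mx a p : isUT n a -> inrange n p -> (1 < p)%N ->
  comm n (transv n 1 p 1) a = row1mx (mxnil (mxinv n a) p).
Proof.
move=> Ha hp h1p; have h1 := inrange1 hp; have Hb := mxinv_UT Ha.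
have hv := UTrow_mxnil Hb h1p; have HX := row1mx_UT h1 hv.
apply: comm_eq_mul => //; first exact: transv_UT.
rewrite (mxmul_transv 1 (mxmul_UT HX Ha) (ltnW h1p)) (row1mx_mxmul _ Ha).
rewrite (transv_mxmul 1 Ha (ltnW h1p)); apply: mxP => k l /=.
have row_p m : \sum_(1 <= r < m.+1) mxnil (mxinv n a) p r * a r m = a p m - idm F n p m.
  rewrite (@mxmul_widen _ _ 1%N p m (ltnW h1p)) ?mxnil_mxmul ?mxmulVl // => r hr.
  by rewrite mxnil_UT // ltnNge (ltnW hr) !andbF.
have hp1 : p != 1%N by rewrite neq_ltn h1p orbT.
rewrite !row_p (UT_lower Ha h1p) (idm_offdiag hp1) subr0 [idm F n p l]idmEl hp.
case: (eqVneq k 1%N) => [->|nk].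
  rewrite (UT_diag _ Ha) h1; by case: (eqVneq l p) => [->|nl] /=; ring.
have -> : a k 1%N = 0.
  case: (ltnP 1 k) => hk; first exact: UT_lower.
  by rewrite (UT_outl _ Ha) // (_ : k = 0)%N //; lia.
by rewrite add0r mul0r if_same addr0.
Qed.

End Unitriangular.

Definition not_last (n : dimn) (j : nat) : bool :=
  if n is Some m then (j <= m.-1)%N else true.

Lemma not_last_le (n : dimn) (l j : nat) : (l <= j)%N -> not_last n j -> not_last n l.
Proof. by case: n => [m|] //=; lia. Qed.

Lemma exists_col_after (n : dimn) (q : nat) : inrange n q -> not_last n q ->
  exists2 N, inrange n N & (q < N)%N.
Proof.
rewrite /inrange; case: n => [m|] /= /andP[h1 h2] hq; last by exists q.+1.
by exists m; [apply/andP; split | ]; lia.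
Qed.

Lemma almost_identity_mxinv (F : fieldType) (n : dimn) (phi : mx F -> mx F) :
  (forall a, isUT n a -> isUT n (phi a)) ->
  (forall x y, isUT n x -> isUT n y -> phi (comm n x y) = comm n (phi x) (phi y)) ->
  almost_identity n phi ->
  forall a p q, isUT n a -> (2 <= p)%N -> not_last n q ->
  mxinv n (phi a) p q = mxinv n a p q.
Proof.
move=> phiUT phi_comm phi_id a p q Ha h1p hq_last; have Ha' := phiUT a Ha.
case: (boolP [&& inrange n p, inrange n q & (p < q)%N]) => [|hpq]; last first.
  by rewrite (mxinv_UT Ha) // (mxinv_UT Ha').
case/and3P=> hp hq hpq; have h1 := inrange1 hp.
have [N hN hqN] := exists_col_after hq hq_last.
have h1N : (1 < N)%N by lia.
have HT := transv_UT (1 : F) h1 hp h1p; have HS := transv_UT (1 : F) hq hN hqN.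
have HC := comm_UT HT Ha.
have := phi_comm _ _ HC HS; rewrite (phi_comm _ _ HT Ha) !phi_id //.
rewrite (comm_transv_row1mx Ha) // (comm_transv_row1mx Ha') //.
rewrite (comm_row1mx_transv (UTrow_mxnil (mxinv_UT Ha) h1p) hq hN hqN).
rewrite (comm_row1mx_transv (UTrow_mxnil (mxinv_UT Ha') h1p) hq hN hqN) phi_id //.
move/(congr1 (fun b => b 1%N N)); rewrite /transv !eqxx /=.
by move/addrI/subrI.
Qed.

Theorem mainTheorem1 (F : fieldType) (n : dimn) (phi : mx F -> mx F)
  (Hpc : is_PCmap n phi) (Hai : almost_identity n phi)
  (a : mx F) (Ha : isUT n a) (i j : nat)
  (Hi : inrange n i) (Hi2 : (2 <= i)%N)
  (Hj : inrange n j) (Hjn : if n is Some m then (j <= m.-1)%N else true) :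
  phi a i j = a i j /\ mxinv n (phi a) i j = mxinv n a i j.
Proof.
case: Hpc => phiUT _ _ phi_comm.
have inv_eq := almost_identity_mxinv phiUT phi_comm Hai Ha.
split; last exact: inv_eq.
rewrite -[in LHS](mxinvK (phiUT a Ha)) -[in RHS](mxinvK Ha).
apply: mxinv_local => k l hik hlj; apply: inv_eq.
  exact: leq_trans hik.
exact: not_last_le hlj Hjn.
Qed.
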